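(* (1) Suppose there are a function $D:\mathbb{N}\rightarrow\mathbb{R}_{>0}$ and a constant $C>0$ such that for every $n$, every (possibly partial) Boolean function $F:X\rightarrow\{0,1\}$ with $X\subseteq\{0,1\}^n$, and every nondeterministic quantum query algorithm for $F$ using $T$ queries, there is a nondeterministic quantum communication protocol for $F^{\oplus}$ using at most $C\,D(n)\,T$ qubits. Then $D(n)=\Omega(\log n)$, i.e., there is $c>0$ with $D(n)\ge c\log n$ for all sufficiently large $n$. The same conclusion holds with ''nondeterministic'' replaced throughout by ''exact''. (2) Suppose there are a function $D:\mathbb{N}\rightarrow\mathbb{R}_{>0}$ and a constant $C>0$ such that for every $n$, every $F:\{0,1\}^n\rightarrow\{0,1\}$, and every unbounded error quantum query algorithm for $F$ using $T$ queries, there is an unbounded error quantum communication protocol for $F^{\wedge}$ using at most $C\,D(n)\,T$ qubits. Then $D(n)=\Omega(\log n)$.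
   Context: A quantum query algorithm for $F$ alternates input-independent unitaries with the oracle $O_x:|i,b,z\rangle\mapsto|i,b\oplus x_i,z\rangle$ and measures an output bit. It is exact if it always outputs $F(x)$; nondeterministic if for every input in the domain it outputs 1 with positive probability exactly when $F(x)=1$; unbounded error if on every input in the domain it outputs $F(x)$ with probability strictly greater than $1/2$. Quantum communication protocols are two-party protocols exchanging qubits, with the same three correctness notions relative to the distributed function. For $F$ on $n$ bits, $F^{\oplus}(x,y)=F(x\oplus y)$ (Alice holds $x$, Bob holds $y$; defined when $x\oplus y$ is in the domain of $F$) and $F^{\wedge}(x,y)=F(x\wedge y)$ with bitwise AND. *)

From mathcomp Require Import all_boot all_order all_algebra.
From mathcomp.real_closed Require Import complex.
From mathcomp Require Import reals exp.
Import GRing.Theory Num.Theory.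
Set Implicit Arguments. Unset Strict Implicit. Unset Printing Implicit Defensive.
Local Open Scope ring_scope.

Section Quantum.
Variable R : realType.
Local Notation C := (R[i]).

Definition bits (n : nat) := {ffun 'I_n -> bool}.
Definition bxor n (x y : bits n) : bits n := [ffun i => x i (+) y i].
Definition band n (x y : bits n) : bits n := [ffun i => x i && y i].

Definition vec (S : finType) := S -> C.
Definition op (S : finType) := S -> S -> C.     (* matrix U s t = <s|U|t> *)
Definition apply (S : finType) (U : op S) (v : vec S) : vec S :=
  fun s => \sum_t U s t * v t.
Definition unitary (S : finType) (U : op S) : Prop :=
  forall s t, \sum_u (U u s)^* * U u t = (s == t)%:R.
Definition unit_vec (S : finType) (v : vec S) : Prop := \sum_s `|v s| ^+ 2 = 1.
Definition prob (S : finType) (v : vec S) (acc : pred S) : C :=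
  \sum_(s | acc s) `|v s| ^+ 2.

(* basis states |i,b,z> : i query index, b answer bit, z workspace *)
Definition QS (n w : nat) := ('I_n * bool * 'I_w)%type.
Definition omap n w (x : bits n) (t : QS n w) : QS n w :=
  (t.1.1, t.1.2 (+) x t.1.1, t.2).
Definition oracle n w (x : bits n) : op (QS n w) :=
  fun s t => (s == omap x t)%:R.
Fixpoint qrun n w (U : nat -> op (QS n w)) (x : bits n) (psi0 : vec (QS n w))
  (k : nat) : vec (QS n w) :=
  match k with
  | 0 => apply (U 0%N) psi0
  | k'.+1 => apply (U k) (apply (oracle x) (qrun U x psi0 k'))
  end.
Definition qaccept n w (T : nat) (U : nat -> op (QS n w)) (psi0 : vec (QS n w))
  (acc : pred (QS n w)) (x : bits n) : C := prob (qrun U x psi0 T) acc.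
Definition valid_qalg n w (T : nat) (U : nat -> op (QS n w)) (psi0 : vec (QS n w)) : Prop :=
  unit_vec psi0 /\ forall j, (j <= T)%N -> unitary (U j).

Inductive mode := Exact | Nondet | Unbounded.
(* p = probability of outputting 1, b = the correct value *)
Definition correct (m : mode) (p : C) (b : bool) : Prop :=
  match m with
  | Exact => p = (b : nat)%:R
  | Nondet => (0 < p) = b
  | Unbounded => if b then 1 / 2%:R < p else p < 1 / 2%:R
  end.

Definition qalg_for (m : mode) n w (dom : pred (bits n)) (F : bits n -> bool)
  (T : nat) (U : nat -> op (QS n w)) (psi0 : vec (QS n w)) (acc : pred (QS n w)) : Prop :=
  valid_qalg T U psi0 /\ forall x, dom x -> correct m (qaccept T U psi0 acc x) (F x).

(* Global space: Alice's register 'I_a.+1, one-qubit channel bool,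
   Bob's register 'I_b.+1; initial state |0,0,0> (no prior entanglement).
   Step j is a unitary of Alice on (A,channel) depending on x if j is even,
   of Bob on (channel,B) depending on y if j is odd.  Between consecutive
   steps the channel qubit is sent, so a k+1-step protocol communicates
   exactly k qubits.  The party performing the last step measures its own
   registers in the computational basis. *)
Definition PS (a b : nat) := ('I_a.+1 * bool * 'I_b.+1)%type.
Definition AS (a : nat) := ('I_a.+1 * bool)%type.
Definition BS (b : nat) := (bool * 'I_b.+1)%type.
Definition liftA a b (U : op (AS a)) : op (PS a b) :=
  fun s t => U s.1 t.1 * (s.2 == t.2)%:R.
Definition liftB a b (V : op (BS b)) : op (PS a b) :=
  fun s t => V (s.1.2, s.2) (t.1.2, t.2) * (s.1.1 == t.1.1)%:R.
Definition pinit a b : vec (PS a b) := fun s => (s == (ord0, false, ord0))%:R.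
Definition pstep n a b (UA : nat -> bits n -> op (AS a))
  (UB : nat -> bits n -> op (BS b)) (x y : bits n) (j : nat) : op (PS a b) :=
  if odd j then liftB (UB j y) else liftA (UA j x).
Fixpoint prun n a b (UA : nat -> bits n -> op (AS a)) (UB : nat -> bits n -> op (BS b)) (x y : bits n) (k : nat) : vec (PS a b) :=
  match k with
  | 0 => apply (pstep UA UB x y 0) (@pinit a b)
  | k'.+1 => apply (pstep UA UB x y k) (prun UA UB x y k')
  end.
Definition paccept n a b (k : nat) (UA : nat -> bits n -> op (AS a)) (UB : nat -> bits n -> op (BS b)) (accA : pred (AS a))
  (accB : pred (BS b)) (x y : bits n) : C :=
  prob (prun UA UB x y k)
    (fun s : PS a b => if odd k then accB (s.1.2, s.2) else accA s.1).
Definition valid_prot n a b (UA : nat -> bits n -> op (AS a))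
  (UB : nat -> bits n -> op (BS b)) : Prop :=
  forall j x, unitary (UA j x) /\ unitary (UB j x).

(* If [partial] is false, only
   total functions F are considered. *)
Definition simulation (m : mode) (comb : forall n, bits n -> bits n -> bits n)
  (partial : bool) (D : nat -> R) (Cc : R) : Prop :=
  forall (n : nat) (dom : pred (bits n)) (F : bits n -> bool),
    (~~ partial -> forall x, dom x) ->
  forall (w T : nat) (U : nat -> op (QS n w)) (psi0 : vec (QS n w)) (acc : pred (QS n w)),
    qalg_for m dom F T U psi0 acc ->
    exists (a b k : nat) (UA : nat -> bits n -> op (AS a))
           (UB : nat -> bits n -> op (BS b))
           (accA : pred (AS a)) (accB : pred (BS b)),
      [/\ valid_prot UA UB,
          (k%:R <= Cc * D n * T%:R :> R) &
          forall x y, dom (comb n x y) ->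
            correct m (paccept k UA UB accA accB x y) (F (comb n x y))].

Definition Omega_log (D : nat -> R) : Prop :=
  exists c : R, 0 < c /\ exists N : nat, forall n : nat, (N <= n)%N -> c * ln (n%:R) <= D n.

End Quantum.

From Pilot Require Import Defs.
From mathcomp Require Import all_boot all_order all_algebra.
From mathcomp.real_closed Require Import complex.
From mathcomp Require Import reals exp.
From mathcomp Require Import ring lra zify.
Import Order.TTheory GRing.Theory Num.Theory.
Set Implicit Arguments. Unset Strict Implicit. Unset Printing Implicit Defensive.
Local Open Scope ring_scope.

(* A protocol exchanging k qubits has amplitudes that are sums of at most
   2^(k+1) products f(x, Alice's register, channel) * g(y, channel, Bob's
   register), since each message only doubles the number of terms; hence its
   acceptance probability is a sum of at most 2^(2k+3) products F(x) G(y).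
   - XOR: one query of the Deutsch-Jozsa algorithm decides whether the first
     m = 2^kd bits are all zero or balanced.  On pairs of Hadamard codewords of
     length m this yields a diagonal acceptance matrix with nonzero diagonal,
     so its rank bound forces m <= 2^(2k+3).
   - AND: one query computes OR with unbounded error.  With Alice holding the
     unit vector e_i, the acceptance probability exceeds 1/2 iff y_i = 1.  If
     n > 2^(2k+4) + 1, some nonzero l satisfies sum_i l_i = 0 and
     sum_i l_i F_r(e_i) = 0 for all r; for y_i = [l_i > 0] the sum
     sum_i l_i (p(e_i, y) - 1/2) is then both zero and positive.
   Either way n <= 2^(2k+5) with k <= C D(n), so D(n) >= ln n / (4 C ln 2). *)

Lemma sum_pair (V : nmodType) (I J : finType) (F : I * J -> V) :
  \sum_p F p = \sum_i \sum_j F (i, j).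
Proof. by rewrite pair_big; apply: eq_bigr => -[]. Qed.

Lemma orthogonal_vector (K : fieldType) (I J : finType) (f : I -> J -> K) :
  (#|I| < #|J|)%N ->
  exists l : J -> K, (exists j, l j != 0) /\ forall r, \sum_j l j * f r j = 0.
Proof.
move=> ltIJ; pose A := \matrix_(j < #|J|, r < #|I|) f (enum_val r) (enum_val j).
have : kermx A != 0.
  by rewrite -mxrank_eq0 mxrank_ker subn_eq0 -ltnNge (leq_ltn_trans (rank_leq_col A)).
case/matrix0Pn => i0 [j0 nz]; exists (fun j => kermx A i0 (enum_rank j)); split.
  by exists (enum_val j0); rewrite enum_valK.
move=> r; move/matrixP: (mulmx_ker A) => /(_ i0 (enum_rank r)); rewrite !mxE.
apply: etrans; rewrite (reindex (@enum_val J J)) /=; last exact: onW_bij (enum_val_bij J).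
by apply: eq_bigr => j _; rewrite enum_valK [A _ _]mxE enum_rankK.
Qed.

Lemma sum_orthogonal_factor (K : comRingType) (I J : finType) (l : J -> K)
    (f : I -> J -> K) (g : I -> K) :
  (forall r, \sum_j l j * f r j = 0) -> \sum_j l j * \sum_r f r j * g r = 0.
Proof.
move=> lf; under eq_bigr do rewrite mulr_sumr.
rewrite exchange_big big1 // => r _.
under eq_bigr do rewrite mulrA.
by rewrite -mulr_suml lf mul0r.
Qed.

Lemma card_le_diag_factor (K : fieldType) (I J : finType) (f g : I -> J -> K) :
  (forall j j', j != j' -> \sum_r f r j * g r j' = 0) ->
  (forall j, \sum_r f r j * g r j != 0) -> (#|J| <= #|I|)%N.
Proof.
move=> offdiag diag; rewrite leqNgt; apply/negP => ltIJ.
have [l [[j0 lj0] lf]] := orthogonal_vector f ltIJ.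
have := sum_orthogonal_factor (fun r => g r j0) lf.
rewrite (bigD1 j0) //= [X in _ + X]big1 => [|j ne_jj0]; last by rewrite offdiag ?mulr0.
by rewrite addr0 => /eqP; rewrite mulf_eq0 (negbTE lj0) (negbTE (diag j0)).
Qed.

Lemma card_le_sign_factor0 (R : realFieldType) (I J : finType) (f : I -> J -> R)
    (g : I -> {ffun J -> bool} -> R) :
  (forall j (y : {ffun J -> bool}),
     if y j then 0 < \sum_r f r j * g r y else \sum_r f r j * g r y < 0) ->
  (#|J| <= #|I|)%N.
Proof.
move=> sign; rewrite leqNgt; apply/negP => ltIJ.
have [l [[j0 lj0] lf]] := orthogonal_vector f ltIJ.
pose y := [ffun j => 0 < l j].
have term_ge0 j : 0 <= l j * \sum_r f r j * g r y.
  have := sign j y; rewrite ffunE; case: ifP => [l_gt0 S_gt0 | /negbT l_le0 S_lt0].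
    by rewrite mulr_ge0 ?ltW.
  by rewrite mulr_le0 ?(ltW S_lt0) ?leNgt.
have /eqP := sum_orthogonal_factor (fun r => g r y) lf.
rewrite psumr_eq0 // => /allP /(_ j0 (mem_index_enum _)).
rewrite mulf_eq0 (negbTE lj0) /=.
by have := sign j0 y; case: (y j0) => [/lt0r_neq0 | /ltr0_neq0] /negbTE ->.
Qed.

Lemma card_le_sign_factor (R : realFieldType) (I J : finType) (f : I -> J -> R)
    (g : I -> {ffun J -> bool} -> R) (c : R) :
  (forall j (y : {ffun J -> bool}),
     if y j then c < \sum_r f r j * g r y else \sum_r f r j * g r y < c) ->
  (#|J| <= #|I|.+1)%N.
Proof.
move=> sign.
pose f' (r : unit + I) j := if r is inr r' then f r' j else 1.
pose g' (r : unit + I) y := if r is inr r' then g r' y else - c.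
rewrite -add1n -card_unit -card_sum; apply: (@card_le_sign_factor0 _ _ _ f' g') => j y.
rewrite big_sumType (big_pred1 tt) //= mul1r addrC.
by have := sign j y; case: (y j); rewrite ?subr_gt0 ?subr_lt0.
Qed.

Lemma sum_delta (V : pzSemiRingType) (T : finType) (c : T) (F : T -> V) :
  \sum_t (c == t)%:R * F t = F c.
Proof.
rewrite (bigD1 c) //= eqxx mul1r big1 ?addr0 // => t /negbTE.
by rewrite eq_sym => ->; rewrite mul0r.
Qed.

Lemma complex_half (R : realType) : 1 / 2%:R = ((1 / 2%:R : R)%:C)%C :> R[i].
Proof. by rewrite fmorph_div rmorph1 rmorph_nat. Qed.

Section ProtocolRank.
Variable R : realType.
Local Notation C := (R[i]).
Local Notation Re := (@complex.Re R).
Local Notation Im := (@complex.Im R).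
Variables (n a b : nat).

Lemma sumPS (V : nmodType) (F : PS a b -> V) :
  \sum_s F s = \sum_(al : 'I_a.+1) \sum_(c : bool) \sum_(be : 'I_b.+1) F (al, c, be).
Proof. by rewrite !pair_bigA; apply: eq_bigr => -[[al c] be]. Qed.

Lemma apply_liftA (U : op R (AS a)) (v : vec R (PS a b)) al c be :
  apply (liftA U) v (al, c, be) = \sum_(t : AS a) U (al, c) t * v (t, be).
Proof.
rewrite /apply /liftA sum_pair; apply: eq_bigr => t _.
under eq_bigr do rewrite /= mulrAC mulrC.
by rewrite sum_delta.
Qed.

Lemma apply_liftB (V : op R (BS b)) (v : vec R (PS a b)) al c be :
  apply (liftB V) v (al, c, be) = \sum_(t : BS b) V (c, be) t * v (al, t.1, t.2).
Proof.
rewrite /apply /liftB sumPS.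
rewrite (eq_bigr (fun al' => (al == al')%:R * \sum_(t : BS b) V (c, be) t * v (al', t.1, t.2))).
  by rewrite sum_delta.
move=> al' _; rewrite sum_pair mulr_sumr; apply: eq_bigr => c' _.
by rewrite mulr_sumr; apply: eq_bigr => be' _; rewrite /= mulrAC mulrC.
Qed.

Definition amp_split (psi : bits n -> bits n -> vec R (PS a b)) (K : nat) : Prop :=
  exists (I : finType) (f : I -> bits n -> 'I_a.+1 -> bool -> C)
         (g : I -> bits n -> bool -> 'I_b.+1 -> C),
    (#|I| <= K)%N /\
    forall x y al c be, psi x y (al, c, be) = \sum_r f r x al c * g r y c be.

Lemma amp_split_pinit : amp_split (fun _ _ => @pinit R a b) 1.
Proof.
exists unit, (fun _ _ al c => ((al == ord0) && ~~ c)%:R), (fun _ _ _ be => (be == ord0)%:R).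
split=> [|x y al c be]; first by rewrite card_unit.
rewrite (big_pred1 tt) // /pinit !xpair_eqE.
by case: (al == ord0); case: c; case: (be == ord0); rewrite ?mul1r ?mul0r.
Qed.

Lemma amp_splitA psi K (U : bits n -> op R (AS a)) : amp_split psi K ->
  amp_split (fun x y => apply (liftA (U x)) (psi x y)) K.*2.
Proof.
move=> [I [f [g [cardI psiE]]]].
exists (I * bool)%type,
  (fun p x al c => \sum_(al' : 'I_a.+1) U x (al, c) (al', p.2) * f p.1 x al' p.2),
  (fun p y _ be => g p.1 y p.2 be); split=> [|x y al c be].
  by rewrite card_prod card_bool muln2 leq_double.
rewrite apply_liftA !sum_pair /=.
under eq_bigr do under eq_bigr do rewrite psiE mulr_sumr.
under [RHS]eq_bigr do under eq_bigr do rewrite mulr_suml.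
under eq_bigr do rewrite exchange_big /=.
rewrite [LHS]exchange_big; apply: eq_bigr => r _.
by rewrite exchange_big; apply: eq_bigr => c' _; apply: eq_bigr => al' _; rewrite mulrA.
Qed.

Lemma amp_splitB psi K (V : bits n -> op R (BS b)) : amp_split psi K ->
  amp_split (fun x y => apply (liftB (V y)) (psi x y)) K.*2.
Proof.
move=> [I [f [g [cardI psiE]]]].
exists (I * bool)%type, (fun p x al _ => f p.1 x al p.2),
  (fun p y c be => \sum_(be' : 'I_b.+1) V y (c, be) (p.2, be') * g p.1 y p.2 be');
  split=> [|x y al c be].
  by rewrite card_prod card_bool muln2 leq_double.
rewrite apply_liftB !sum_pair /=.
under eq_bigr do under eq_bigr do rewrite psiE mulr_sumr.
under [RHS]eq_bigr do under eq_bigr do rewrite mulr_sumr.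
under eq_bigr do rewrite exchange_big /=.
rewrite [LHS]exchange_big; apply: eq_bigr => r _.
by apply: eq_bigr => c' _; apply: eq_bigr => be' _; rewrite mulrCA.
Qed.

Lemma amp_split_prun (UA : nat -> bits n -> op R (AS a))
    (UB : nat -> bits n -> op R (BS b)) k :
  amp_split (fun x y => prun UA UB x y k) (2 ^ k.+1).
Proof.
elim: k => [|k IH]; first exact: (amp_splitA (UA 0%N) amp_split_pinit).
rewrite expnS mul2n /= /pstep; case: (odd k.+1).
  exact: (amp_splitB (UB k.+1) IH).
exact: (amp_splitA (UA k.+1) IH).
Qed.

Lemma prob_split psi K (PA : pred (AS a)) (PB : pred (BS b)) : amp_split psi K ->
  exists (I : finType) (F G : I -> bits n -> C), (#|I| <= (K * K).*2)%N /\
    forall x y, prob (psi x y) (fun s => PA s.1 && PB (s.1.2, s.2)) = \sum_i F i x * G i y.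
Proof.
move=> [I [f [g [cardI psiE]]]].
exists ((I * I) * bool)%type,
  (fun p x => \sum_(al : 'I_a.+1) (PA (al, p.2))%:R * (f p.1.1 x al p.2 * (f p.1.2 x al p.2)^*)),
  (fun p y => \sum_(be : 'I_b.+1) (PB (p.2, be))%:R * (g p.1.1 y p.2 be * (g p.1.2 y p.2 be)^*)).
split=> [|x y]; first by rewrite !card_prod card_bool muln2 leq_double leq_mul.
pose h r (s : PS a b) := f r x s.1.1 s.1.2 * g r y s.1.2 s.2.
transitivity (\sum_r \sum_r' \sum_s (PA s.1 && PB (s.1.2, s.2))%:R * (h r s * (h r' s)^*)).
  under [RHS]eq_bigr do rewrite exchange_big /=.
  rewrite [RHS]exchange_big /prob big_mkcond /=; apply: eq_bigr => -[[al c] be] _.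
  case: (_ && _) => /=; last by rewrite big1 // => r _; rewrite big1 // => r' _; rewrite mul0r.
  rewrite normCK psiE rmorph_sum mulr_suml; apply: eq_bigr => r _.
  by rewrite mulr_sumr; apply: eq_bigr => r' _; rewrite mul1r.
rewrite !sum_pair /=; apply: eq_bigr => r _; apply: eq_bigr => r' _.
rewrite sumPS exchange_big; apply: eq_bigr => c _.
rewrite mulr_suml; apply: eq_bigr => al _; rewrite mulr_sumr; apply: eq_bigr => be _.
by rewrite /h -mulnb natrM rmorphM /=; ring.
Qed.

Lemma paccept_split k (UA : nat -> bits n -> op R (AS a))
    (UB : nat -> bits n -> op R (BS b)) accA accB :
  exists (I : finType) (F G : I -> bits n -> C), (#|I| <= 2 ^ k.*2.+3)%N /\
    forall x y, paccept k UA UB accA accB x y = \sum_i F i x * G i y.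
Proof.
have [I [F [G [cardI E]]]] := prob_split (if odd k then xpredT else accA)
  (if odd k then accB else xpredT) (amp_split_prun UA UB k).
exists I, F, G; split=> [|x y].
  by rewrite -mul2n -expnD -expnS addnn doubleS in cardI.
by rewrite -E /paccept /prob; apply: eq_bigl => s; case: (odd k); rewrite ?andbT.
Qed.

Lemma protocol_diag_bound k (UA : nat -> bits n -> op R (AS a))
    (UB : nat -> bits n -> op R (BS b)) accA accB (J : finType) (X Y : J -> bits n) :
  (forall j j', j != j' -> paccept k UA UB accA accB (X j) (Y j') = 0) ->
  (forall j, paccept k UA UB accA accB (X j) (Y j) != 0) ->
  (#|J| <= 2 ^ k.*2.+3)%N.
Proof.
move=> offdiag diag; have [I [F [G [cardI E]]]] := paccept_split k UA UB accA accB.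
apply: leq_trans cardI.
apply: (@card_le_diag_factor _ _ _ (fun r j => F r (X j)) (fun r j => G r (Y j))).
  by move=> j j' /offdiag; rewrite E.
by move=> j; rewrite -E.
Qed.

Lemma Re_sum_mul (I : finType) (F G : I -> C) :
  Re (\sum_i F i * G i) = \sum_i (Re (F i) * Re (G i) - Im (F i) * Im (G i)).
Proof.
rewrite (big_morph Re (id1 := 0) (op1 := +%R)) //; last by case=> ? ? [].
by apply: eq_bigr => i _; case: (F i) => ? ?; case: (G i).
Qed.

Lemma protocol_sign_bound k (UA : nat -> bits n -> op R (AS a))
    (UB : nat -> bits n -> op R (BS b)) accA accB (X : 'I_n -> bits n) :
  (forall i (y : bits n), if y i then 1 / 2%:R < paccept k UA UB accA accB (X i) y
                          else paccept k UA UB accA accB (X i) y < 1 / 2%:R) ->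
  (n <= (2 ^ k.*2.+4).+1)%N.
Proof.
move=> sign; have [I [F [G [cardI E]]]] := paccept_split k UA UB accA accB.
pose f (p : I * bool) i := if p.2 then Re (F p.1 (X i)) else - Im (F p.1 (X i)).
pose g (p : I * bool) y := if p.2 then Re (G p.1 y) else Im (G p.1 y).
have ReE i y : \sum_p f p i * g p y = Re (paccept k UA UB accA accB (X i) y).
  rewrite E Re_sum_mul sum_pair; apply: eq_bigr => r _.
  by rewrite big_bool /= mulNr addrC.
have cardIb : (#|{: I * bool}| <= 2 ^ k.*2.+4)%N.
  by rewrite card_prod card_bool expnS mulnC leq_mul2l cardI orbT.
rewrite -(card_ord n); apply: leq_trans (@card_le_sign_factor _ _ _ f g (1 / 2%:R) _) _;
  last by rewrite ltnS; exact: cardIb.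
move=> i y; rewrite ReE; have := sign i y.
by rewrite complex_half; case: (y i); rewrite ltcE => /andP [].
Qed.

End ProtocolRank.

Section QueryAlgorithms.
Variable R : realType.
Local Notation C := (R[i]).

Definition idop (S : finType) : op R S := fun s t => (s == t)%:R.

Lemma apply_idop (S : finType) (v : vec R S) s : apply (@idop S) v s = v s.
Proof. exact: sum_delta. Qed.

Lemma unitary_idop (S : finType) : unitary (@idop S).
Proof.
move=> s t; under eq_bigr do rewrite /idop conjC_nat eq_sym.
exact: sum_delta.
Qed.

Lemma conj_real (x : R) : ((x%:C)%C)^* = (x%:C)%C :> C.
Proof. exact: conjc_real. Qed.

Lemma sqr_norm_real (x : R) : `|(x%:C)%C| ^+ 2 = ((x ^+ 2)%:C)%C :> C.
Proof. by rewrite normCK conj_real -rmorphM expr2. Qed.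

Lemma unit_vec_real (S : finType) (r : S -> R) :
  \sum_s r s ^+ 2 = 1 -> unit_vec (fun s => (r s)%:C)%C.
Proof.
by move=> r1; rewrite /unit_vec (eq_bigr _ (fun s _ => sqr_norm_real (r s))) -rmorph_sum r1.
Qed.

Variables n w : nat.

Lemma sumQS (V : nmodType) (F : QS n w -> V) :
  \sum_s F s = \sum_(i : 'I_n) \sum_(b : bool) \sum_(z : 'I_w) F (i, b, z).
Proof. by rewrite !pair_bigA; apply: eq_bigr => -[[i b] z]. Qed.

Lemma omapK (x : bits n) : involutive (@Defs.omap n w x).
Proof. by move=> [[i b] z]; rewrite /Defs.omap /= addbK. Qed.

Lemma apply_oracle (x : bits n) (v : vec R (QS n w)) s :
  apply (oracle R x) v s = v (Defs.omap x s).
Proof.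
rewrite /apply /oracle -(sum_delta (Defs.omap x s) v); apply: eq_bigr => t _.
by rewrite -{1}(omapK x s) (inj_eq (inv_inj (omapK x))).
Qed.

Lemma qrun1_idop (U : nat -> op R (QS n w)) x psi0 s : U 0%N = @idop _ ->
  qrun U x psi0 1 s = \sum_t U 1%N s t * psi0 (Defs.omap x t).
Proof.
by move=> U0; apply: eq_bigr => t _; rewrite apply_oracle U0 apply_idop.
Qed.

End QueryAlgorithms.

Section Reflection.
Variable R : realType.
Variables (T : finType) (phi : T -> R) (e : T).

Let v t := phi t - (t == e)%:R.
Let kappa := (1 - phi e)^-1.

Definition reflection : op R T := fun s t => (((s == t)%:R - kappa * v s * v t)%:C)%C.

Hypothesis phi_unit : \sum_t phi t ^+ 2 = 1.
Hypothesis phi_e_neq1 : phi e != 1.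

Let one_sub_phi_e_neq0 : 1 - phi e != 0.
Proof. by rewrite subr_eq0 eq_sym. Qed.

Let kappa_v_e : kappa * v e = -1.
Proof. by rewrite /kappa /v eqxx mulr1n -[phi e - 1]opprB mulrN mulVf. Qed.

Let kappa_sum_v2 : kappa * \sum_t v t ^+ 2 = 2.
Proof.
have -> : \sum_t v t ^+ 2 = \sum_t (phi t ^+ 2 - 2 * ((e == t)%:R * phi t) + (e == t)%:R * 1).
  by apply: eq_bigr => t _; rewrite /v eq_sym; case: (e == t) => /=; ring.
rewrite big_split sumrB /= phi_unit -mulr_sumr !sum_delta /kappa.
by field.
Qed.

Lemma reflection_row t : reflection e t = ((phi t)%:C)%C.
Proof. by rewrite /reflection kappa_v_e /v eq_sym; congr (_%:C)%C; ring. Qed.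

Lemma unitary_reflection : unitary reflection.
Proof.
move=> s t; under eq_bigr do rewrite conj_real -rmorphM.
rewrite -rmorph_sum -[RHS](rmorph_nat (real_complex R)); congr (_%:C)%C.
transitivity (\sum_u ((s == u)%:R * (u == t)%:R - (s == u)%:R * (kappa * v s * v t)
   - (t == u)%:R * (kappa * v s * v t) + kappa ^+ 2 * v s * v t * v u ^+ 2)).
  apply: eq_bigr => u _.
  case: (eqVneq s u) => [->|ne_su]; case: (eqVneq t u) => [->|ne_tu];
    rewrite ?eqxx ?[u == _]eq_sym ?(negbTE ne_su) ?(negbTE ne_tu) /=; ring.
rewrite !big_split /= !sumrN !sum_delta -mulr_sumr.
have -> : kappa ^+ 2 * v s * v t * \sum_u v u ^+ 2 = 2 * kappa * v s * v t.
  by rewrite -kappa_sum_v2; ring.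
ring.
Qed.

End Reflection.

Section InnerProductTest.
Variables (R : realType) (n w : nat) (phi : QS n w -> R) (e : QS n w).
Hypothesis phi_unit : \sum_s phi s ^+ 2 = 1.
Hypothesis phi_e_neq1 : phi e != 1.

Definition inner_test : nat -> op R (QS n w) :=
  fun j => if j == 0%N then @idop R _ else reflection phi e.

Lemma inner_test_valid : valid_qalg 1 inner_test (fun s => (phi s)%:C)%C.
Proof.
split=> [|j _]; first exact: unit_vec_real.
by rewrite /inner_test; case: (j == 0%N); [exact: unitary_idop | exact: unitary_reflection].
Qed.

Lemma inner_test_accept x :
  qaccept 1 inner_test (fun s => (phi s)%:C)%C (pred1 e) x
  = (((\sum_s phi s * phi (Defs.omap x s)) ^+ 2)%:C)%C.
Proof.
rewrite /qaccept /prob big_pred1_eq qrun1_idop //.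
under eq_bigr do rewrite /inner_test /= reflection_row // -rmorphM.
by rewrite -rmorph_sum sqr_norm_real.
Qed.

End InnerProductTest.

Lemma correct_indicator (R : realType) (md : mode) (b : bool) :
  md <> Unbounded -> correct md (b%:R : R[i]) b.
Proof. by case: md => // _; case: b; rewrite /= ?ltr01 ?ltxx. Qed.

Section DeutschJozsa.
Variables (R : realType) (n m : nat).
Hypotheses (m_gt0 : (0 < m)%N) (m_le : (m <= n.+1)%N).

Definition balance (x : bits n.+1) : R := \sum_(i < n.+1 | (i < m)%N) (-1) ^+ x i.

Definition dj_dom (x : bits n.+1) : bool := (balance x == m%:R) || (balance x == 0).
Definition dj_fun (x : bits n.+1) : bool := balance x == m%:R.

Let sqrt2m := Num.sqrt (m.*2)%:R : R.

Definition dj_state (s : QS n.+1 1) : R := (s.1.1 < m)%:R * (-1) ^+ s.1.2 / sqrt2m.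
Definition dj_target : QS n.+1 1 := (ord0, false, ord0).

Let m_neq0 : m%:R != 0 :> R.
Proof. by rewrite pnatr_eq0 -lt0n. Qed.

Let sqrt2m_sqr : sqrt2m ^+ 2 = m%:R *+ 2.
Proof. by rewrite sqr_sqrtr ?ler0n // -muln2 natrM mulr_natr. Qed.

Let sqrt2m_neq0 : sqrt2m != 0.
Proof. by rewrite /sqrt2m sqrtr_eq0 -ltNge ltr0n double_gt0. Qed.

Let sum_prefix (F : 'I_n.+1 -> R) :
  \sum_(i < n.+1) (i < m)%:R * F i = \sum_(i < n.+1 | (i < m)%N) F i.
Proof.
by rewrite [RHS]big_mkcond; apply: eq_bigr => i _; case: (i < m)%N; rewrite ?mul1r ?mul0r.
Qed.

Lemma dj_state_unit : \sum_s dj_state s ^+ 2 = 1.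
Proof.
rewrite sumQS; transitivity (\sum_(i < n.+1) (i < m)%:R * (2 / sqrt2m ^+ 2)).
  apply: eq_bigr => i _; rewrite big_bool !big_ord1 /dj_state /=.
  by case: (i < m)%N => /=; field.
rewrite sum_prefix -(big_ord_widen _ (fun _ => 2 / sqrt2m ^+ 2) m_le) sumr_const card_ord.
by rewrite sqrt2m_sqr; field.
Qed.

Lemma dj_state_target_neq1 : dj_state dj_target != 1.
Proof.
rewrite /dj_state /= m_gt0 expr0 !mul1r invr_eq1; apply/eqP => sqrt2m1.
have /eqP := sqrt2m_sqr; rewrite sqrt2m1 expr1n.
by rewrite -mulr_natr -natrM eq_sym pnatr_eq1 muln_eq1 andbF.
Qed.

Lemma dj_inner x : \sum_s dj_state s * dj_state (Defs.omap x s) = balance x / m%:R.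
Proof.
rewrite sumQS; transitivity (\sum_(i < n.+1) (i < m)%:R * ((-1) ^+ x i * (2 / sqrt2m ^+ 2))).
  apply: eq_bigr => i _; rewrite big_bool !big_ord1 /dj_state /Defs.omap /=.
  by case: (i < m)%N; case: (x i) => /=; field.
by rewrite sum_prefix -mulr_suml -/(balance x) sqrt2m_sqr; field.
Qed.

Lemma dj_qalg md : md <> Unbounded ->
  qalg_for md dj_dom dj_fun 1 (inner_test dj_state dj_target)
    (fun s => (dj_state s)%:C)%C (pred1 dj_target).
Proof.
move=> md_ok; split=> [|x dom_x].
  exact: inner_test_valid dj_state_unit dj_state_target_neq1.
rewrite inner_test_accept ?dj_state_target_neq1 // dj_inner.
suff -> : (balance x / m%:R) ^+ 2 = (dj_fun x)%:R by rewrite rmorph_nat; exact: correct_indicator.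
rewrite /dj_fun; case/orP: dom_x => /eqP ->; first by rewrite eqxx divff // expr1n.
by rewrite mul0r expr0n [0 == _ :> R]eq_sym (negbTE m_neq0).
Qed.

End DeutschJozsa.

Section UnboundedOr.
Variables (R : realType) (n : nat).

Let d : R := (n.*2.+1)%:R.

(* Weight 1/d on each |i,0,0> and n/d on |0,0,1>: the query moves the weight
   of |i,0,0> onto an accepting state exactly when x_i = 1. *)
Definition or_weight (s : QS n.+1 2) : R :=
  if s.1.2 then 0 else if s.2 == ord0 then 1 / d
  else if s.1.1 == ord0 then n%:R / d else 0.

Definition or_state : vec R (QS n.+1 2) := fun s => (Num.sqrt (or_weight s))%:C%C.
Definition or_accept : pred (QS n.+1 2) := fun s => (s.2 != ord0) || s.1.2.

Let d_gt0 : 0 < d. Proof. by rewrite ltr0n. Qed.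

Lemma or_weight_ge0 s : 0 <= or_weight s.
Proof. by rewrite /or_weight; repeat case: ifP => _; rewrite ?divr_ge0 ?ler0n // ltW. Qed.

Lemma sqr_norm_or_state s : `|or_state s| ^+ 2 = (or_weight s)%:C%C.
Proof. by rewrite sqr_norm_real sqr_sqrtr // or_weight_ge0. Qed.

Lemma sum_or_weight : \sum_s or_weight s = 1.
Proof.
rewrite sumQS; transitivity (\sum_(i < n.+1) (1 / d + (ord0 == i)%:R * (n%:R / d))).
  apply: eq_bigr => i _; rewrite big_bool !big_ord_recl !big_ord0 /or_weight /= [ord0 == _]eq_sym.
  by case: (i == ord0); rewrite /= ?mul1r ?mul0r ?add0r ?addr0.
rewrite big_split /= sum_delta sumr_const card_ord -mulr_natr.
have dE : d = n.+1%:R + n%:R by rewrite /d -natrD addSn addnn.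
have n_ge0 := ler0n R n; rewrite dE; field; rewrite gt_eqF //; lra.
Qed.

Lemma or_accept_weight (x : bits n.+1) :
  \sum_(s | or_accept s) or_weight (Defs.omap x s) = (\sum_i x i + n)%:R / d.
Proof.
rewrite big_mkcond sumQS natrD natr_sum mulrDl mulr_suml.
transitivity (\sum_i ((x i)%:R / d + (ord0 == i)%:R * (n%:R / d))); last first.
  by rewrite big_split /= sum_delta.
apply: eq_bigr => i _; rewrite big_bool !big_ord_recl !big_ord0 /or_weight /Defs.omap /=.
rewrite [ord0 == _]eq_sym; case: (x i); case: (i == ord0);
  by rewrite /= ?mul1r ?mul0r ?add0r ?addr0.
Qed.

Lemma or_qalg : qalg_for Unbounded (fun _ => true) (fun x : bits n.+1 => [exists i, x i])
  1 (fun _ => @idop R _) or_state or_accept.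
Proof.
split=> [|x _].
  split=> [|j _]; last exact: unitary_idop.
  by rewrite /unit_vec (eq_bigr _ (fun s _ => sqr_norm_or_state s)) -rmorph_sum sum_or_weight.
rewrite /qaccept /prob (eq_bigr (fun s => (or_weight (Defs.omap x s))%:C%C)); last first.
  by move=> s _; rewrite qrun1_idop // sum_delta sqr_norm_or_state.
rewrite /= -rmorph_sum or_accept_weight complex_half !ltcR.
have n_ge0 := ler0n R n; have dE : d = 2 * n%:R + 1 by rewrite /d -addn1 natrD -muln2 natrM mulrC.
case: existsP => [[i xi] | no_one].
  have : (1 <= \sum_i x i)%N by rewrite (bigD1 i) //= xi.
  rewrite -(ler1n R) natrD ltr_pdivlMr // dE => ones_ge1; lra.
rewrite big1 ?add0r => [|i _]; last first.
  by apply/eqP; rewrite eqb0; apply/negP => xi; apply: no_one; exists i.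
by rewrite ltr_pdivrMr // dE; lra.
Qed.

End UnboundedOr.

Section Hadamard.
Variable kd : nat.
Local Notation T := {ffun 'I_kd -> bool}.

Definition dot (a b : T) : bool := \big[addb/false]_(j < kd) (a j && b j).

Definition flip (j0 : 'I_kd) (b : T) : T := [ffun j => b j (+) (j == j0)].

Lemma flipK j0 : involutive (flip j0).
Proof. by move=> b; apply/ffunP => j; rewrite !ffunE addbK. Qed.

Lemma dot_flip a b j0 : dot a (flip j0 b) = dot a b (+) a j0.
Proof.
rewrite /dot (eq_bigr (fun j => (a j && b j) (+) (a j && (j == j0)))); last first.
  by move=> j _; rewrite ffunE andb_addr.
rewrite big_split /=; congr (_ (+) _).
by rewrite (bigD1 j0) //= eqxx andbT big1 ?addbF // => j /negbTE ->; rewrite andbF.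
Qed.

Lemma sum_sign_dot (R : numDomainType) (a a' : T) :
  \sum_(b : T) (-1) ^+ (dot a b (+) dot a' b) = (a == a')%:R * #|T|%:R :> R.
Proof.
have [<- | ne_aa'] := eqVneq a a'.
  by rewrite mul1r (eq_bigr (fun _ => 1)) ?sumr_const // => b _; rewrite addbb.
have [j0 ne_j0] : exists j0, a j0 != a' j0.
  apply/existsP; apply: contraR ne_aa' => /existsPn eq_aa'.
  by apply/eqP/ffunP => j; apply/eqP/negbNE.
set S := \sum_b _; apply/eqP; suff : S *+ 2 == 0 by rewrite mul0r mulrn_eq0.
rewrite mulr2n addr_eq0; apply/eqP; rewrite {1}/S (reindex_inj (can_inj (flipK j0))) /= -sumrN.
apply: eq_bigr => b _; rewrite !dot_flip.
by move: ne_j0; case: (a j0); case: (a' j0); case: (dot a b); case: (dot a' b);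
  rewrite //= ?expr1 ?opprK.
Qed.

Variable n : nat.
Hypothesis card_T_le : (#|T| <= n.+1)%N.

Definition hadamard (a : T) : bits n.+1 :=
  [ffun i : 'I_n.+1 =>
     if insub (val i) : option 'I_#|T| is Some o then dot a (enum_val o) else false].

Lemma balance_hadamard (R : realType) (a a' : T) :
  balance R #|T| (bxor (hadamard a) (hadamard a')) = (a == a')%:R * #|T|%:R.
Proof.
pose h j : R := if insub j : option 'I_#|T| is Some o
  then (-1) ^+ (dot a (enum_val o) (+) dot a' (enum_val o)) else 1.
rewrite /balance (eq_bigr (fun i : 'I_n.+1 => h i)) => [|i _]; last first.
  by rewrite /h !ffunE; case: insub.
rewrite -(big_ord_widen _ h card_T_le) -sum_sign_dot (reindex (@enum_val T T)) /=;
  last exact: onW_bij (enum_val_bij T).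
by apply: eq_bigr => o _; rewrite /h valK.
Qed.

Lemma dj_dom_hadamard (R : realType) (a a' : T) :
  dj_dom R #|T| (bxor (hadamard a) (hadamard a')).
Proof. by rewrite /dj_dom balance_hadamard; case: (a == a'); rewrite ?mul1r ?mul0r eqxx ?orbT. Qed.

Lemma dj_fun_hadamard (R : realType) (a a' : T) :
  dj_fun R #|T| (bxor (hadamard a) (hadamard a')) = (a == a').
Proof.
rewrite /dj_fun balance_hadamard; case: (a == a'); rewrite ?mul1r ?eqxx // mul0r.
by rewrite eq_sym pnatr_eq0 card_ffun card_bool card_ord expn_eq0.
Qed.

End Hadamard.

Lemma paccept_ge0 (R : realType) n a b k (UA : nat -> bits n -> op R (AS a))
    (UB : nat -> bits n -> op R (BS b)) accA accB x y :
  0 <= paccept k UA UB accA accB x y.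
Proof. by rewrite sumr_ge0 // => s _; rewrite exprn_ge0. Qed.

Lemma correct_support (R : realType) (md : mode) (p : R[i]) (b : bool) :
  md <> Unbounded -> 0 <= p -> correct md p b -> (p != 0) = b.
Proof.
case: md => //= _ p_ge0 => [-> | <-]; first by case: b; rewrite ?oner_eq0 ?eqxx.
by rewrite lt0r p_ge0 andbT.
Qed.

Lemma simulation_promise_bound (R : realType) md (D : nat -> R) Cc :
  md <> Unbounded -> simulation md bxor true D Cc ->
  forall N, (0 < N)%N -> exists k : nat, k%:R <= Cc * D N /\ (N <= 2 ^ (k.*2 + 5))%N.
Proof.
move=> md_ok sim [//|n] _; set kd := trunc_log 2 n.+1.
have card_T : #|{ffun 'I_kd -> bool}| = (2 ^ kd)%N by rewrite card_ffun card_bool card_ord.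
have card_le : (#|{ffun 'I_kd -> bool}| <= n.+1)%N by rewrite card_T trunc_logP.
have m_gt0 : (0 < #|{ffun 'I_kd -> bool}|)%N by rewrite card_T expn_gt0.
have [a [b [k [UA [UB [accA [accB [_ k_le prot_ok]]]]]]]] :=
  sim n.+1 _ _ (fun not_true => ltac:(done)) 1%N 1%N _ _ _ (dj_qalg R m_gt0 card_le md_ok).
exists k; split; first by rewrite mulr1 in k_le.
have accept_hadamard (a1 a2 : {ffun 'I_kd -> bool}) :
    (paccept k UA UB accA accB (hadamard n a1) (hadamard n a2) != 0) = (a1 == a2).
  rewrite (correct_support md_ok (paccept_ge0 _ _ _ _ _ _ _) (prot_ok _ _ _)) ?dj_dom_hadamard //.
  exact: (dj_fun_hadamard card_le R a1 a2).
have : (2 ^ kd <= 2 ^ k.*2.+3)%N.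
  rewrite -card_T.
  apply: (@protocol_diag_bound R n.+1 a b k UA UB accA accB _ (hadamard n) (hadamard n)).
    by move=> a1 a2 ne; have := accept_hadamard a1 a2; rewrite (negbTE ne) => /negbFE/eqP.
  by move=> a1; have := accept_hadamard a1 a1; rewrite eqxx.
rewrite leq_exp2l // => kd_le.
apply: leq_trans (ltnW (trunc_log_ltn _ (ltnSn 1))) _.
by rewrite leq_exp2l //; apply: (leq_ltn_trans kd_le); rewrite -addn3 ltn_add2l.
Qed.


Lemma simulation_and_bound (R : realType) (D : nat -> R) Cc :
  simulation Unbounded band false D Cc ->
  forall N, (0 < N)%N -> exists k : nat, k%:R <= Cc * D N /\ (N <= 2 ^ (k.*2 + 5))%N.
Proof.
move=> sim [//|n] _.
have [a [b [k [UA [UB [accA [accB [_ k_le prot_ok]]]]]]]] :=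
  sim n.+1 _ _ (fun _ _ => erefl) 2%N 1%N _ _ _ (or_qalg R n).
exists k; split; first by rewrite mulr1 in k_le.
pose e i : bits n.+1 := [ffun j => j == i].
have : (n.+1 <= (2 ^ k.*2.+4).+1)%N.
  apply: (@protocol_sign_bound R n.+1 a b k UA UB accA accB e) => i y.
  have -> : y i = [exists j, band (e i) y j].
    apply/idP/existsP => [yi | [j]]; first by exists i; rewrite !ffunE eqxx.
    by rewrite !ffunE => /andP [/eqP ->].
  exact: prot_ok.
move/leq_trans; apply.
by rewrite -addn4 ltn_exp2l // ltn_add2l.
Qed.

Lemma ln_le_pow2 (R : realType) (N p : nat) : (0 < N)%N -> (N <= 2 ^ p)%N ->
  ln (N%:R : R) <= p%:R * ln 2%:R.
Proof.
move=> N_gt0 N_le; rewrite mulr_natl -lnXn ?ltr0n // ler_ln ?posrE ?ltr0n ?exprn_gt0 //.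
by rewrite -natrX ler_nat.
Qed.

Lemma Omega_log_of_comm_bound (R : realType) (D : nat -> R) Cc : 0 < Cc ->
  (forall N, (0 < N)%N -> exists k : nat, k%:R <= Cc * D N /\ (N <= 2 ^ (k.*2 + 5))%N) ->
  Omega_log D.
Proof.
move=> Cc_gt0 bound; have ln2_gt0 : 0 < ln (2%:R : R) by rewrite ln_gt0 // ltr1n.
exists (1 / (4%:R * Cc * ln 2%:R)); split; first by rewrite divr_gt0 // !mulr_gt0.
exists (2 ^ 10)%N => N N_large.
have N_gt0 : (0 < N)%N by apply: leq_trans N_large; rewrite expn_gt0.
have [k [k_le N_le]] := bound N N_gt0.
have k_large : (10 <= k.*2 + 5)%N by rewrite -(leq_exp2l _ _ (ltnSn 1)) (leq_trans N_large).
have lnN_le : ln (N%:R : R) <= (4 * k)%:R * ln 2%:R.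
  apply: le_trans (ln_le_pow2 R N_gt0 N_le) _.
  by rewrite ler_wpM2r ?(ltW ln2_gt0) // ler_nat; lia.
rewrite mul1r mulrC ler_pdivrMr ?mulr_gt0 // (le_trans lnN_le) // natrM.
have := ler_wpM2r (ltW ln2_gt0) k_le; lra.
Qed.

Theorem theorem4 (R : realType) :
  [/\ (forall (D : nat -> R) (Cc : R), (forall n, 0 < D n) -> 0 < Cc ->
         simulation Nondet bxor true D Cc -> Omega_log D),
      (forall (D : nat -> R) (Cc : R), (forall n, 0 < D n) -> 0 < Cc ->
         simulation Exact bxor true D Cc -> Omega_log D) &
      (forall (D : nat -> R) (Cc : R), (forall n, 0 < D n) -> 0 < Cc ->
         simulation Unbounded band false D Cc -> Omega_log D)].
Proof.
split=> D Cc _ Cc_gt0 sim; apply: (Omega_log_of_comm_bound Cc_gt0).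
- exact: simulation_promise_bound sim.
- exact: simulation_promise_bound sim.
- exact: simulation_and_bound sim.
Qed.
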